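(* Let $\mathcal{X}\subset\mathbb{R}^n$ be compact and consider the control-affine system $\bm{x}_{t+1}=\bm{f}(\bm{x}_t)+\bm{g}(\bm{x}_t)\bm{u}_t$ with $\bm{f}\colon\mathcal{X}\to\mathcal{X}$, $\bm{g}\colon\mathcal{X}\to\mathbb{R}^{n\times m}$. Suppose a data set of $N$ trajectories $\tau_n=\{\bm{x}_t^n\}_{t=0}^T$, $n=1,\dots,N$, is generated by an agent applying a stabilizing deterministic policy $\bm{\pi}$ (i.e. $\bm{x}_{t+1}^n=\bm{f}(\bm{x}_t^n)+\bm{g}(\bm{x}_t^n)\bm{\pi}(\bm{x}_t^n)$, zero perturbation covariance). Fix $\beta>0$. If $\bm{f}(\bm{x})\neq\bm{f}(\bm{x}')$ for all $\bm{x},\bm{x}'\in\mathcal{X}$ with $\bm{x}\neq\bm{x}'$, then there exists a (differentiable) function $V$ such that the closed-loop control law $$\hat{\bm{\pi}}(\bm{x})=-\beta\left[\nabla V(\bm{f}(\bm{x}))\,\bm{g}(\bm{x})\right]^\intercal$$ generates the training data, i.e. $\bm{x}_{t+1}^n=\bm{f}(\bm{x}_t^n)+\bm{g}(\bm{x}_t^n)\hat{\bm{\pi}}(\bm{x}_t^n)$ for all $t=0,\dots,T-1$ and $n=1,\dots,N$.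
   Context: $\nabla V$ denotes the gradient of $V$ as a row vector. *)

From HB Require Import structures.
From mathcomp Require Import all_boot all_order all_algebra.
From mathcomp Require Import all_classical all_reals all_analysis.
Set Implicit Arguments. Unset Strict Implicit. Unset Printing Implicit Defensive.
Import Order.TTheory GRing.Theory Num.Theory.
Import numFieldNormedType.Exports.
Local Open Scope classical_set_scope.
Local Open Scope ring_scope.

Definition grad (R : realType) (n : nat) (V : 'cV[R]_n -> R) (y : 'cV[R]_n)
  : 'rV[R]_n := \row_i ('D_(delta_mx i 0) V y).

Definition closed_loop (R : realType) (n m : nat)
  (f : 'cV[R]_n -> 'cV[R]_n) (g : 'cV[R]_n -> 'M[R]_(n, m))
  (pi : 'cV[R]_n -> 'cV[R]_m) (x : 'cV[R]_n) : 'cV[R]_n :=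
  f x + g x *m pi x.

Definition stabilizing (R : realType) (n m : nat) (X : set 'cV[R]_n)
  (f : 'cV[R]_n -> 'cV[R]_n) (g : 'cV[R]_n -> 'M[R]_(n, m))
  (pi : 'cV[R]_n -> 'cV[R]_m) : Prop :=
  exists xe : 'cV[R]_n,
    forall x0, X x0 ->
      (fun k : nat => iter k (closed_loop f g pi) x0) @ \oo --> xe.

Definition pihat (R : realType) (n m : nat) (beta : R)
  (V : 'cV[R]_n -> R) (f : 'cV[R]_n -> 'cV[R]_n)
  (g : 'cV[R]_n -> 'M[R]_(n, m)) (x : 'cV[R]_n) : 'cV[R]_m :=
  - beta *: (grad V (f x) *m g x)^T.

(* The control effect g x pi(x) lies in the column space of g x, which over
   the reals is also the column space of g x (g x)^T; hence it equals
   g x (-beta (w g x)^T) for some row vector w = w(x).  As f is injective on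
   the visited states, it remains to build a differentiable V with prescribed
   gradients w_j at finitely many distinct points y_j = f(x_j).  Take
   V = sum_j phi_j ell_j with phi_j(y) = prod_(i <> j) |y - y_i|^2, which
   vanishes to second order at every y_i with i <> j, and ell_j the affine
   form vanishing at y_j with gradient w_j / phi_j(y_j). *)

From HB Require Import structures.
From mathcomp Require Import all_boot all_order all_algebra.
From mathcomp Require Import all_classical all_reals all_analysis.
Set Implicit Arguments. Unset Strict Implicit. Unset Printing Implicit Defensive.
Import Order.TTheory GRing.Theory Num.Theory.
Import numFieldNormedType.Exports.
Local Open Scope classical_set_scope.
Local Open Scope ring_scope.

Section LinearAlgebra.
Variable R : realFieldType.

Lemma mulmx_tr_self_eq0 k n (A : 'M[R]_(k, n)) : (A *m A^T == 0) = (A == 0).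
Proof.
apply/eqP/eqP => [AAt0|->]; last by rewrite mul0mx.
apply/matrixP => i j; rewrite mxE; apply/eqP; rewrite -sqrf_eq0; apply/eqP.
have /matrixP/(_ i i) := AAt0; rewrite !mxE => /eqP.
rewrite psumr_eq0 => [/allP/(_ j (mem_index_enum _))|l _]; rewrite mxE -expr2.
- by move=> /eqP.
- exact: sqr_ge0.
Qed.

Lemma mulmx_tr_self_eqmx n m (G : 'M[R]_(n, m)) : (G *m G^T :=: G^T)%MS.
Proof.
apply/eqmxP; rewrite -mxrank_leqif_eq ?submxMl //.
have := mxrank_mul_ker G G^T; rewrite mxrank_tr.
suff -> : (G :&: kermx G^T)%MS = 0 by rewrite mxrank0 addn0 => ->.
apply/eqP; rewrite -submx0; apply/rV_subP => u.
rewrite sub_capmx submx0 => /andP[/submxP[a ->] /sub_kermxP].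
move=> aGGt0; rewrite -(mulmx_tr_self_eq0 (a *m G)).
by rewrite trmx_mul mulmxA aGGt0 mul0mx.
Qed.

Lemma gradient_feedback_exists n m (G : 'M[R]_(n, m)) (p : 'cV_m) (beta : R) :
  beta != 0 -> exists w : 'rV_n, G *m (- beta *: (w *m G)^T) = G *m p.
Proof.
move=> beta_neq0.
have /submxP[r rGGt] : ((G *m p)^T <= G *m G^T)%MS.
  by rewrite mulmx_tr_self_eqmx trmx_mul submxMl.
exists (- beta^-1 *: r); rewrite -[G *m p]trmxK rGGt -scalemxAl linearZ /=.
rewrite linearZ /= -scalemxAr scalerA mulrNN mulfV // scale1r.
by rewrite !trmx_mul trmxK mulmxA.
Qed.

End LinearAlgebra.

Section Flatness.
Variables (R : numFieldType) (V : normedModType R).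
Implicit Types (f g : V -> R) (a : V).

Definition flat_at f a := f a = 0 /\ forall v, 'D_v f a = 0.

Lemma differentiable_big_sum (I : Type) (r : seq I) (P : pred I) (F : I -> V -> R) a :
  (forall i, P i -> differentiable (F i) a) ->
  differentiable (\sum_(i <- r | P i) F i) a.
Proof.
move=> dF; elim/big_ind: _ => [|f g|//]; last exact: differentiableD.
exact: (differentiable_cst (0 : R)).
Qed.

Lemma differentiable_big_prod (I : Type) (r : seq I) (P : pred I) (F : I -> V -> R) a :
  (forall i, P i -> differentiable (F i) a) ->
  differentiable (\prod_(i <- r | P i) F i) a.
Proof.
by move=> dF; elim/big_ind: _ => // f g; exact: differentiableM.
Qed.

Lemma flat_atD f g a : differentiable f a -> differentiable g a ->
  flat_at f a -> flat_at g a -> flat_at (f + g) a.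
Proof.
move=> df dg [f0 Df] [g0 Dg]; split => [|v]; first by rewrite addrfctE f0 g0 addr0.
by rewrite deriveD ?Df ?Dg ?addr0 //; exact: diff_derivable.
Qed.

Lemma flat_atMr f g a : differentiable f a -> differentiable g a ->
  flat_at f a -> flat_at (f * g) a.
Proof.
move=> df dg [f0 Df]; split => [|v]; first by rewrite mulrfctE f0 mul0r.
by rewrite deriveM ?f0 ?Df ?scale0r ?scaler0 ?addr0 //; exact: diff_derivable.
Qed.

Lemma flat_at_sqr f a : differentiable f a -> f a = 0 -> flat_at (f ^+ 2) a.
Proof.
move=> df f0; split => [|v]; first by rewrite exprfctE /= f0 expr0n.
by rewrite deriveX ?f0 ?expr1 ?mulr0 ?scale0r //; exact: diff_derivable.
Qed.

Lemma flat_at_sum (I : Type) (r : seq I) (P : pred I) (F : I -> V -> R) a :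
  (forall i, P i -> differentiable (F i) a) -> (forall i, P i -> flat_at (F i) a) ->
  flat_at (\sum_(i <- r | P i) F i) a.
Proof.
move=> dF fF.
suff [] : differentiable (\sum_(i <- r | P i) F i) a /\
          flat_at (\sum_(i <- r | P i) F i) a by [].
elim/big_ind: _ => [|h k [dh fh] [dk fk]|i Pi]; last by split; [exact: dF | exact: fF].
- split; first exact: (differentiable_cst (0 : R)).
  by split => // v; exact: derive_cst.
- by split; [exact: differentiableD | exact: flat_atD].
Qed.

Lemma flat_at_prod (I : finType) (P : pred I) (F : I -> V -> R) a j : P j ->
  (forall i, P i -> differentiable (F i) a) -> flat_at (F j) a ->
  flat_at (\prod_(i | P i) F i) a.
Proof.
move=> Pj dF fFj; rewrite (bigD1 j) //=; apply: flat_atMr => //; first exact: dF.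
by apply: differentiable_big_prod => i /andP[/dF].
Qed.

End Flatness.

Lemma derive_coord (R : realFieldType) p q i j (a v : 'M[R]_(p, q)) :
  'D_v (fun y : 'M[R]_(p, q) => y i j) a = v i j.
Proof.
have := derive_mx (M := id) (@derivable_id _ _ a v).
by rewrite derive_id => /matrixP/(_ i j); rewrite mxE.
Qed.

Section GradientInterpolation.
Variables (R : realType) (n : nat).
Notation vec := 'cV[R]_n.
Implicit Types (c a v y : vec) (w : 'rV[R]_n).

Lemma differentiable_coordB c i a : differentiable (fun y : vec => y i 0 - c i 0) a.
Proof.
exact: differentiableB (differentiable_coord _ _ _) (differentiable_cst _ _).
Qed.

Lemma derive_coordB c i a v : 'D_v (fun y : vec => y i 0 - c i 0) a = v i 0.
Proof.
rewrite (deriveB (g := cst (c i 0))) ?derive_coord ?derive_cst ?subr0 //.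
exact/diff_derivable/differentiable_coord.
Qed.

Definition sqdist c : vec -> R := \sum_(i < n) (fun y => y i 0 - c i 0) ^+ 2.

Lemma differentiable_sqdist c a : differentiable (sqdist c) a.
Proof.
by apply: differentiable_big_sum => i _; apply/differentiableX/differentiable_coordB.
Qed.

Lemma flat_at_sqdist c : flat_at (sqdist c) c.
Proof.
apply: flat_at_sum => i _; first exact/differentiableX/differentiable_coordB.
by apply: flat_at_sqr; [exact: differentiable_coordB | exact: subrr].
Qed.

Lemma sqdist_eq0 c y : sqdist c y = 0 -> y = c.
Proof.
rewrite /sqdist fct_sumE; under eq_bigr do rewrite exprfctE.
move=> /psumr_eq0P sq0; apply/matrixP => i j; rewrite (ord1 j).
by apply/eqP; rewrite -subr_eq0 -sqrf_eq0 sq0 // => k _; exact: sqr_ge0.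
Qed.

Definition affine_form w c : vec -> R := fun y => (w *m (y - c)) 0 0.

Lemma affine_formE w c :
  affine_form w c = \sum_(i < n) w 0 i *: (fun y => y i 0 - c i 0).
Proof.
apply/funext => y; rewrite fct_sumE /affine_form !mxE.
by apply: eq_bigr => i _; rewrite !mxE.
Qed.

Lemma affine_formxx w c : affine_form w c c = 0.
Proof. by rewrite /affine_form subrr mulmx0 mxE. Qed.

Lemma differentiable_affine_form w c a : differentiable (affine_form w c) a.
Proof.
rewrite affine_formE; apply: differentiable_big_sum => i _.
exact/differentiableZ/differentiable_coordB.
Qed.

Lemma derive_affine_form w c a v : 'D_v (affine_form w c) a = (w *m v) 0 0.
Proof.
have dcoordB i : derivable (fun y : vec => y i 0 - c i 0) a v.
  exact/diff_derivable/differentiable_coordB.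
rewrite affine_formE derive_sum => [|i]; last exact/derivableZ.
by rewrite mxE; apply: eq_bigr => i _; rewrite deriveZ ?derive_coordB.
Qed.

Lemma grad_eq (F : vec -> R) y w : (forall v, 'D_v F y = (w *m v) 0 0) -> grad F y = w.
Proof.
move=> DF; apply/rowP => i; rewrite mxE DF mxE (bigD1 i) //= big1 => [|k ki].
  by rewrite mxE !eqxx mulr1 addr0.
by rewrite mxE (negPf ki) mulr0.
Qed.

Lemma gradient_interpolation (I : finType) (ys : I -> vec) (ws : I -> 'rV[R]_n) :
  injective ys ->
  exists F : vec -> R, (forall y, differentiable F y) /\ forall j, grad F (ys j) = ws j.
Proof.
move=> ys_inj.
pose phi j := \prod_(i | i != j) sqdist (ys i).
pose ell j := affine_form ((phi j (ys j))^-1 *: ws j) (ys j).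
have dphi j y : differentiable (phi j) y.
  by apply: differentiable_big_prod => i _; exact: differentiable_sqdist.
have dterm j y : differentiable (phi j * ell j) y.
  by apply: differentiableM; [exact: dphi | exact: differentiable_affine_form].
have phi_flat j k : j != k -> flat_at (phi j) (ys k).
  rewrite eq_sym => kj.
  apply: (flat_at_prod (P := fun i => i != j) (F := fun i => sqdist (ys i)) kj).
    by move=> i _; exact: differentiable_sqdist.
  exact: flat_at_sqdist.
have phi_neq0 j : phi j (ys j) != 0.
  rewrite /phi fct_prodE; apply/prodf_neq0 => i ij; apply/eqP => /sqdist_eq0.
  by move/ys_inj/eqP; rewrite eq_sym (negPf ij).
exists (\sum_j phi j * ell j); split => [y|k]; first exact: differentiable_big_sum.
apply: grad_eq => v; rewrite (bigD1 k) //= deriveD; last 2 first.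
- exact/diff_derivable.
- exact/diff_derivable/differentiable_big_sum.
have [_ -> //] : flat_at (\sum_(j | j != k) phi j * ell j) (ys k).
  apply: flat_at_sum => [j _|j kj]; first exact: dterm.
  apply: flat_atMr (phi_flat j k kj); first exact: dphi.
  exact: differentiable_affine_form.
rewrite addr0 (deriveM (f := phi k) (g := ell k)); last 2 first.
- exact/diff_derivable.
- exact/diff_derivable/differentiable_affine_form.
rewrite /ell derive_affine_form affine_formxx scale0r addr0 -scalemxAl mxE.
by rewrite [_ *: _]mulrA mulfV ?mul1r.
Qed.

End GradientInterpolation.

Theorem theorem1 (R : realType) (n m : nat) (X : set 'cV[R]_n)
  (f : 'cV[R]_n -> 'cV[R]_n) (g : 'cV[R]_n -> 'M[R]_(n, m))
  (pi : 'cV[R]_n -> 'cV[R]_m) (N T : nat) (xs : 'I_N -> nat -> 'cV[R]_n)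
  (beta : R) :
  compact X ->
  (forall x, X x -> X (f x)) ->
  stabilizing X f g pi ->
  (forall k t, (t <= T)%N -> X (xs k t)) ->
  (forall k t, (t < T)%N -> xs k t.+1 = f (xs k t) + g (xs k t) *m pi (xs k t)) ->
  0 < beta ->
  (forall x x', X x -> X x' -> x <> x' -> f x <> f x') ->
  exists V : 'cV[R]_n -> R,
    (forall y, differentiable V y) /\
    (forall k t, (t < T)%N ->
       xs k t.+1 = f (xs k t) + g (xs k t) *m pihat beta V f g (xs k t)).
Proof.
move=> _ _ _ xsX xs_step beta_gt0 f_inj.
have [w w_gain] := choice (fun x =>
  gradient_feedback_exists (g x) (pi x) (lt0r_neq0 beta_gt0)).
pose L := [seq xs k t | k <- enum 'I_N, t <- iota 0 T].
have xs_in_L k t : (t < T)%N -> xs k t \in L.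
  by move=> tT; apply: allpairs_f; rewrite ?mem_enum ?mem_iota.
have L_X x : x \in L -> X x.
  case/allpairsP => -[k t] [_ /=]; rewrite mem_iota => /andP[_ tT] ->.
  exact/xsX/ltnW.
have fL_inj : injective (fun x : seq_sub L => f (ssval x)).
  move=> [x xL] [y yL] /= fxy; apply/val_inj => /=; apply: contrapT => xy.
  exact: f_inj (L_X x xL) (L_X y yL) xy fxy.
have [V [dV gradV]] :=
  gradient_interpolation (fun x : seq_sub L => w (ssval x)) fL_inj.
exists V; split => // k t tT.
by rewrite xs_step // /pihat (gradV (SeqSub (xs_in_L k t tT))) w_gain.
Qed.
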